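(* Let $M$ be an atomic Puiseux monoid. (1) If $M$ is weak reciprocal, then $|\mathsf{L}_M(1)| = \infty$; in particular, $M$ is not a BFM. (2) If $M$ is reciprocal and $q \in M$ is nonzero, then $|\mathsf{L}_M(q)| \in \{1, \infty\}$; more precisely, $|\mathsf{L}_M(q)| = \infty$ if $1 \mid_M q$, and $|\mathsf{L}_M(q)| = 1$ if $1 \nmid_M q$.
   Context: A Puiseux monoid is an additive submonoid of $(\mathbb{Q}_{\ge 0},+)$. A weak reciprocal Puiseux monoid is one of the form $\langle \frac{1}{d_n} \mid n \in \mathbb{N}\rangle$ for a strictly increasing sequence $(d_n)_{n\ge1}$ of positive integers; it is reciprocal if moreover the $d_n$ are pairwise relatively prime. For $x,y \in M$, $x \mid_M y$ means $y = x + z$ for some $z \in M$. An atom of $M$ is a nonzero element $a$ such that $a=x+y$ with $x,y\in M$ forces $x=0$ or $y=0$; $\mathcal{A}(M)$ is the set of atoms, and $M$ is atomic if each element is a finite sum of atoms. For nonzero $x \in M$, a factorization of $x$ is a formal sum $z = a_1 + \dots + a_\ell$ (unordered, i.e., an element of the free commutative monoid on $\mathcal{A}(M)$) of atoms whose value in $M$ is $x$; its length is $|z| = \ell$; $\mathsf{Z}_M(x)$ is the set of factorizations of $x$ and $\mathsf{L}_M(x) = \{|z| \mid z \in \mathsf{Z}_M(x)\}$ its set of lengths. $M$ is a bounded factorization monoid (BFM) if it is atomic and $\mathsf{L}_M(x)$ is finite for every nonzero $x \in M$. *)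

From HB Require Import structures.
From mathcomp Require Import all_boot all_order all_algebra.
Set Implicit Arguments. Unset Strict Implicit. Unset Printing Implicit Defensive.
Import Order.TTheory GRing.Theory Num.Theory.
Local Open Scope ring_scope.

Definition is_puiseux (M : rat -> Prop) : Prop :=
  [/\ M 0,
      (forall x y, M x -> M y -> M (x + y)) &
      (forall x, M x -> 0 <= x)].

Definition recip_gen (d : nat -> nat) (x : rat) : Prop :=
  exists s : seq nat, x = \sum_(i <- s) ((d i)%:R)^-1.

Definition strinc_pos (d : nat -> nat) : Prop :=
  (forall n, (0 < d n)%N) /\ (forall n, (d n < d n.+1)%N).

Definition weak_reciprocal (M : rat -> Prop) : Prop :=
  exists d : nat -> nat, strinc_pos d /\ (forall x, M x <-> recip_gen d x).

Definition reciprocal (M : rat -> Prop) : Prop :=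
  exists d : nat -> nat, strinc_pos d /\
    (forall i j, i != j -> coprime (d i) (d j)) /\
    (forall x, M x <-> recip_gen d x).

Definition mdivides (M : rat -> Prop) (x y : rat) : Prop :=
  exists z, M z /\ y = x + z.

Definition is_atom (M : rat -> Prop) (a : rat) : Prop :=
  [/\ M a, a != 0 & forall x y, M x -> M y -> a = x + y -> x = 0 \/ y = 0].

Definition atomic (M : rat -> Prop) : Prop :=
  forall x, M x -> exists s : seq rat, (forall a, a \in s -> is_atom M a) /\ x = \sum_(a <- s) a.

Definition lengths (M : rat -> Prop) (x : rat) (n : nat) : Prop :=
  exists s : seq rat, [/\ forall a, a \in s -> is_atom M a, x = \sum_(a <- s) a & size s = n].

Definition finite_natset (A : nat -> Prop) : Prop :=
  exists s : seq nat, forall n, A n <-> n \in s.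

Definition BFM (M : rat -> Prop) : Prop :=
  atomic M /\ forall x, M x -> x != 0 -> finite_natset (lengths M x).

(* Let M = <1/d_n>. Its atoms are among the 1/d_n, and since every 1/d_n has a
   factorization, there are atoms 1/k with k arbitrarily large; writing 1 as k
   copies of 1/k shows that every multiple of 1 has unboundedly long
   factorizations. Conversely, if the d_n are pairwise coprime, a factorization
   of q is a multiset of indices with multiplicities c_i, and 1 does not divide
   q exactly when every c_i < d_i. Clearing denominators and reducing modulo
   d_i, the equality sum c_i/d_i = sum c'_i/d_i forces c_i = c'_i modulo d_i,
   hence c_i = c'_i: the factorization of q is unique. *)
From mathcomp Require Import all_boot all_order all_algebra.
From mathcomp Require Import zify.
Import Order.TTheory GRing.Theory Num.Theory.
Set Implicit Arguments. Unset Strict Implicit. Unset Printing Implicit Defensive.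

Lemma coprime_mulr_mod_inj (m p a b : nat) : coprime m p -> a < m -> b < m ->
  a * p = b * p %[mod m] -> a = b.
Proof.
move=> cop_mp; wlog le_ab : a b / a <= b => [wlog_ab am bm e|am bm].
  by case: (leqP a b) => [|/ltnW] h; [|symmetry]; apply: wlog_ab.
move/eqP; rewrite eq_sym eqn_mod_dvd ?leq_mul2r ?le_ab ?orbT //.
rewrite -mulnBl Gauss_dvdl //.
by case: (posnP (b - a)) => [|pos /(dvdn_leq pos)]; lia.
Qed.

Local Open Scope ring_scope.

Definition recip_sum (d : nat -> nat) (u : seq nat) : rat :=
  \sum_(i <- u) (d i)%:R^-1.

Lemma recip_sum_nseq (d : nat -> nat) n i :
  recip_sum d (nseq n i) = (d i)%:R^-1 *+ n.
Proof. by rewrite /recip_sum big_nseq iter_addr_0. Qed.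

Lemma natr_inv_mulrn (k : nat) : (0 < k)%N -> (k%:R : rat)^-1 *+ k = 1.
Proof. by move=> k_gt0; rewrite -[LHS]mulr_natr mulVf // pnatr_eq0 -lt0n. Qed.

Section CoprimeDenominators.

Variable d : nat -> nat.
Hypothesis d_gt0 : forall i, (0 < d i)%N.
Hypothesis d_coprime : forall i j, i != j -> coprime (d i) (d j).

Section Cofactors.

Variable S : seq nat.
Hypothesis S_uniq : uniq S.

Let cofactor j := (\prod_(k <- S | k != j) d k)%N.

Lemma natr_prod_mul_recip_sum w : {subset w <= S} ->
  (\prod_(k <- S) d k)%:R * recip_sum d w = (\sum_(j <- w) cofactor j)%:R.
Proof.
move=> wS; rewrite mulr_sumr natr_sum; apply: eq_big_seq => j /wS jS.
rewrite (bigD1_seq j) //= natrM mulrAC mulfV ?mul1r // pnatr_eq0 -lt0n.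
exact: d_gt0.
Qed.

Lemma cofactor_sum_mod i w : i \in S ->
  (\sum_(j <- w) cofactor j = count_mem i w * cofactor i %[mod d i])%N.
Proof.
move=> iS; rewrite (bigID (pred1 i)) /=.
rewrite (eq_bigr (fun _ => cofactor i)); last by move=> j /eqP ->.
rewrite big_const_seq iter_addn_0 mulnC.
have /dvdnP[c ->] : (d i %| \sum_(j <- w | j != i) cofactor j)%N.
  apply: dvdn_sum => j ji; rewrite /cofactor -big_filter (bigD1_seq i) /=.
  - exact: dvdn_mulr.
  - by rewrite mem_filter eq_sym ji.
  - exact: filter_uniq.
by rewrite addnC modnMDl.
Qed.

Lemma coprime_cofactor i : coprime (d i) (cofactor i).
Proof.
rewrite /cofactor; elim/big_ind: _ => [|x y|k ki]; first exact: coprimen1.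
  by rewrite coprimeMr => -> ->.
by apply: d_coprime; rewrite eq_sym.
Qed.

End Cofactors.

Lemma perm_eq_recip_sum u v :
  (forall i, count_mem i u < d i)%N -> (forall i, count_mem i v < d i)%N ->
  recip_sum d u = recip_sum d v -> perm_eq u v.
Proof.
move=> u_small v_small e; apply/allP => i _; apply/eqP.
set S := undup (u ++ v).
have uS : {subset u <= S} by move=> x xu; rewrite mem_undup mem_cat xu.
have vS : {subset v <= S} by move=> x xv; rewrite mem_undup mem_cat xv orbT.
have [iS|iNS] := boolP (i \in S); last first.
  have iNu : i \notin u by apply: contra iNS => /uS.
  have iNv : i \notin v by apply: contra iNS => /vS.
  by rewrite (count_memPn iNu) (count_memPn iNv).
apply: (coprime_mulr_mod_inj (coprime_cofactor S i)) => //.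
rewrite -!cofactor_sum_mod ?undup_uniq //; congr (_ %% _)%N.
apply/eqP; rewrite -(eqr_nat rat) -!natr_prod_mul_recip_sum ?undup_uniq //.
by rewrite e.
Qed.

End CoprimeDenominators.

Lemma strinc_pos_gt (d : nat -> nat) : strinc_pos d -> forall n, (n < d n)%N.
Proof.
case=> d_gt0 d_incr; elim=> [|n IH]; first exact: d_gt0.
exact: leq_ltn_trans (d_incr n).
Qed.

Lemma puiseux_sum_atoms (M : rat -> Prop) (s : seq rat) : is_puiseux M ->
  (forall a, a \in s -> is_atom M a) -> M (\sum_(a <- s) a).
Proof.
case=> M0 MD _; elim: s => [|a s IH] s_atoms; first by rewrite big_nil.
rewrite big_cons; apply: MD; first by case: (s_atoms a (mem_head _ _)).
by apply: IH => b bs; apply: s_atoms; rewrite in_cons bs orbT.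
Qed.

Lemma lengths_unbounded (M : rat -> Prop) x : atomic M ->
  (forall B : nat, exists2 k : nat, (B < k)%N & is_atom M (k%:R^-1)) ->
  mdivides M 1 x -> ~ finite_natset (lengths M x).
Proof.
move=> M_atomic small_atoms [z [Mz ->]] [s s_lengths].
have [t [t_atoms z_t]] := M_atomic _ Mz.
have [k gt_k k_atom] := small_atoms (\max_(n <- s) n)%N.
suff /s_lengths k_s : lengths M (1 + z) (k + size t).
  have : (k + size t <= \max_(n <- s) n)%N by exact: leq_bigmax_seq.
  lia.
exists (nseq k k%:R^-1 ++ t); split.
- by move=> a; rewrite mem_cat mem_nseq => /orP[/andP[_ /eqP ->]|/t_atoms].
- by rewrite big_cat big_nseq iter_addr_0 natr_inv_mulrn ?z_t //; lia.
- by rewrite size_cat size_nseq.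
Qed.

Section WeakReciprocal.

Variables (M : rat -> Prop) (d : nat -> nat).
Hypothesis d_strinc : strinc_pos d.
Hypothesis M_gen : forall x, M x <-> recip_gen d x.

Let d_gt0 : forall i, (0 < d i)%N. Proof. by case: d_strinc. Qed.

Lemma mem_recip_sum u : M (recip_sum d u).
Proof. by apply/M_gen; exists u. Qed.

Lemma atom_recip a : is_atom M a -> exists i, a = (d i)%:R^-1.
Proof.
case=> /M_gen[[|i u] ->]; first by rewrite big_nil eqxx.
rewrite big_cons => _ atomic_a; exists i.
have [||] := atomic_a _ _ (mem_recip_sum [:: i]) (mem_recip_sum u).
- by rewrite /recip_sum big_seq1.
- rewrite /recip_sum big_seq1 => /eqP.
  by rewrite invr_eq0 pnatr_eq0 eqn0Ngt d_gt0.
- by rewrite /recip_sum => ->; rewrite addr0.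
Qed.

Lemma atoms_recip s : (forall a, a \in s -> is_atom M a) ->
  exists u, s = [seq (d i)%:R^-1 | i <- u].
Proof.
elim: s => [|a s IH] s_atoms; first by exists [::].
have [i ->] := atom_recip (s_atoms a (mem_head _ _)).
have [b bs|u ->] := IH; first by apply: s_atoms; rewrite in_cons bs orbT.
by exists (i :: u).
Qed.

(* The first atom in a factorization of 1/d_B is some 1/d_i <= 1/d_B. *)
Lemma large_recip_atom : is_puiseux M -> atomic M ->
  forall B : nat, exists2 k : nat, (B < k)%N & is_atom M (k%:R^-1).
Proof.
move=> M_puiseux M_atomic B.
have M_dB : M (d B)%:R^-1.
  by have := mem_recip_sum [:: B]; rewrite /recip_sum big_seq1.
have [[|a s] [s_atoms e]] := M_atomic _ M_dB.
  by move/eqP: e; rewrite big_nil invr_eq0 pnatr_eq0 eqn0Ngt d_gt0.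
have a_atom := s_atoms a (mem_head _ _).
have [i ai] := atom_recip a_atom; exists (d i); last by rewrite -ai.
have rest_ge0 : 0 <= \sum_(b <- s) b.
  have [_ _ M_ge0] := M_puiseux; apply/M_ge0/(puiseux_sum_atoms M_puiseux) => b bs.
  by apply: s_atoms; rewrite in_cons bs orbT.
have : a <= (d B)%:R^-1 by rewrite e big_cons lerDl.
rewrite ai lef_pV2 ?posrE ?ltr0n ?d_gt0 // ler_nat.
exact/leq_trans/strinc_pos_gt.
Qed.

Section Reciprocal.

Hypothesis d_coprime : forall i j, i != j -> coprime (d i) (d j).

Lemma one_mdivides_recip_sum u i :
  (d i <= count_mem i u)%N -> mdivides M 1 (recip_sum d u).
Proof.
move=> /subnK ci; exists (recip_sum d (nseq (count_mem i u - d i) i ++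
                                     [seq j <- u | j != i])).
split; first exact: mem_recip_sum.
rewrite /recip_sum (bigID (pred1 i)) /= big_cat big_filter big_nseq.
rewrite (eq_bigr (fun=> (d i)%:R^-1)); last by move=> j /eqP ->.
rewrite big_const_seq !iter_addr_0 -{1}ci mulrnDr natr_inv_mulrn //.
by rewrite addrCA addrA.
Qed.

Lemma lengths_unique q m n : ~ mdivides M 1 q ->
  lengths M q m -> lengths M q n -> m = n.
Proof.
move=> not_div [s [s_atoms q_s <-]] [t [t_atoms q_t <-]].
have [u su] := atoms_recip s_atoms; have [v tv] := atoms_recip t_atoms.
rewrite su big_map -/(recip_sum d u) in q_s.
rewrite tv big_map -/(recip_sum d v) in q_t.
rewrite su tv !size_map; apply/perm_size.
apply: (perm_eq_recip_sum d_gt0 d_coprime) => [i|i|]; last by rewrite -q_s -q_t.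
- rewrite ltnNge; apply: contra_notN not_div; rewrite q_s.
  exact: one_mdivides_recip_sum.
- rewrite ltnNge; apply: contra_notN not_div; rewrite q_t.
  exact: one_mdivides_recip_sum.
Qed.

End Reciprocal.

End WeakReciprocal.

Theorem proposition4p8 (M : rat -> Prop) :
  is_puiseux M -> atomic M ->
  (weak_reciprocal M -> ~ finite_natset (lengths M 1) /\ ~ BFM M) /\
  (reciprocal M -> forall q : rat, M q -> q != 0 ->
     (mdivides M 1 q -> ~ finite_natset (lengths M q)) /\
     (~ mdivides M 1 q -> exists n : nat, forall m, lengths M q m <-> m = n)).
Proof.
move=> M_puiseux M_atomic; split.
  move=> [d [d_strinc M_gen]].
  have small_atoms := large_recip_atom d_strinc M_gen M_puiseux M_atomic.
  have M0 : M 0 by case: M_puiseux.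
  have not_fin : ~ finite_natset (lengths M 1).
    by apply: lengths_unbounded => //; exists 0; rewrite addr0.
  split=> // -[_ bfm]; apply/not_fin/bfm; last exact: oner_neq0.
  have [d_gt0 _] := d_strinc.
  rewrite -(natr_inv_mulrn (d_gt0 0%N)) -recip_sum_nseq.
  exact: mem_recip_sum.
move=> [d [d_strinc [d_coprime M_gen]]] q Mq _; split.
  exact/lengths_unbounded/(large_recip_atom d_strinc M_gen).
move=> not_div; have [s [s_atoms q_s]] := M_atomic _ Mq.
exists (size s) => m; split=> [q_m|->]; last by exists s.
by apply: (lengths_unique d_strinc M_gen d_coprime not_div q_m); exists s.
Qed.
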